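(* Let $\mathcal{H}$ be a PICOD hypergraph with $\eta(\mathcal{H})=\Delta(\mathcal{H})$. Then $\beta_q(\mathcal{H})=\Delta(\mathcal{H})$ for every prime power $q$, and hence $\beta(\mathcal{H})=\Delta(\mathcal{H})$.
   Context: PICOD problem: a server holds $m$ messages $b_1,\dots,b_m\in\mathbb{F}_q$; there are $n$ clients, client $i$ having side-information $\{b_j: j\in S_i\}$, $S_i\subseteq[m]$, and request-set $R_i=[m]\setminus S_i$ (assumed non-empty); client $i$ wants any one message $b_j$ with $j\in R_i$. A PICOD scheme of length $\ell$ over $\mathbb{F}_q$ is an encoding map $\phi:\mathbb{F}_q^m\to\mathbb{F}_q^\ell$ such that for every client $i$ there is an index $j_i\in R_i$ and a function $\psi_i$ with $\psi_i(\phi(b),(b_k)_{k\in S_i})=b_{j_i}$ for all $b\in\mathbb{F}_q^m$. The PICOD hypergraph $\mathcal{H}=(\mathcal{V},\mathcal{E})$ has vertex set $[m]$ and edge set $\{R_i:i\in[n]\}$. $\beta_q(\mathcal{H})$ is the minimum length of a PICOD scheme over $\mathbb{F}_q$, and $\beta(\mathcal{H})=\min_q\beta_q(\mathcal{H})$. The degree of a vertex is the number of edges containing it; $\Delta(\mathcal{H})$ is the maximum degree. A nested collection of hyperedges of nesting length $L$ is a family $\mathcal{E}_1,\dots,\mathcal{E}_L\subseteq\mathcal{E}$ with $|\mathcal{E}_i|=2^{i-1}$, such that for every $i\in[L-1]$ and every $R\in\mathcal{E}_i$ there exist non-empty edges $R',R''\in\mathcal{E}_{i+1}$ with $R',R''\subsetneq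 R$ and $R'\cap R''=\emptyset$. The nesting number $\eta(\mathcal{H})$ is the maximum nesting length of such a collection in $\mathcal{H}$. *)

From mathcomp Require Import all_boot all_order all_algebra all_field.
Set Implicit Arguments. Unset Strict Implicit. Unset Printing Implicit Defensive.
Import GRing.Theory.

(* A PICOD instance with m messages and n clients is given by the request
   sets R : 'I_n -> {set 'I_m}; the side information of client i is
   S_i = ~: R i. *)

Section PICOD.
Variables (m n : nat) (R : 'I_n -> {set 'I_m}).

Definition picod_edges : {set {set 'I_m}} := [set R i | i : 'I_n].

Definition side_info (i : 'I_n) : {set 'I_m} := ~: R i.

Definition vdegree (v : 'I_m) : nat := #|[set e in picod_edges | v \in e]|.

Definition max_degree : nat := \max_(v : 'I_m) vdegree v.

(* Es i is the paper's E_{i+1} (0-based indexing). *)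
Definition nested_collection (L : nat) (Es : {ffun 'I_L -> {set {set 'I_m}}}) : bool :=
  [forall i : 'I_L, (Es i \subset picod_edges) && (#|Es i| == 2 ^ i)] &&
  [forall i : 'I_L, forall j : 'I_L, (j == i.+1 :> nat) ==>
     [forall e in Es i, exists e1 in Es j, exists e2 in Es j,
        [&& e1 != set0, e2 != set0, e1 \proper e, e2 \proper e
          & [disjoint e1 & e2]]]].

Definition has_nested (L : nat) : bool :=
  [exists Es : {ffun 'I_L -> {set {set 'I_m}}}, nested_collection Es].

(* nesting number eta(H).  Any nested collection of length L >= 1 has
   2^(L-1) distinct edges, all subsets of 'I_m, so L <= m + 1; hence the
   maximum over L < m.+2 is the maximum over all L. *)
Definition nesting_number : nat := \max_(L < m.+2 | has_nested L) L.

Definition picod_scheme (F : fieldType) (l : nat) (phi : 'rV[F]_m -> 'rV[F]_l) : Prop :=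
  forall i : 'I_n, exists2 j : 'I_m, j \in R i &
    exists psi : 'rV[F]_l -> 'rV[F]_m -> F,
      forall b : 'rV[F]_m,
        psi (phi b) (\row_k (if k \in side_info i then b ord0 k else 0%R))%R = b ord0 j.

Definition has_picod_scheme (F : fieldType) (l : nat) : Prop :=
  exists phi : 'rV[F]_m -> 'rV[F]_l, picod_scheme phi.

Definition beta_q_eq (F : fieldType) (b : nat) : Prop :=
  has_picod_scheme F b /\ forall l, has_picod_scheme F l -> b <= l.

Definition beta_eq (b : nat) : Prop :=
  (exists F : finFieldType, has_picod_scheme F b) /\
  forall (F : finFieldType) l, has_picod_scheme F l -> b <= l.

End PICOD.

From mathcomp Require Import all_boot all_order all_algebra all_field.
From mathcomp Require Import zify.
Set Implicit Arguments. Unset Strict Implicit. Unset Printing Implicit Defensive.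
Import GRing.Theory.

(* Lower bound: let slice T c be the set of message vectors agreeing with c
   outside T.  On slice (R i) c the side information of client i is constant,
   so its decoder splits the image of that slice under phi into q fibres by
   the value of the decoded b_j; for T a subset of R i avoiding j, the fibre
   of x contains the image of the T-slice of c with b_j := x.  Thus images of
   T-slices of size at least q^d give images of (R i)-slices of size at least
   q^(d+1).  Descending a nested collection, one of the two disjoint children
   always avoids the decoded message, so a top edge yields q^L <= q^l.

   Upper bound: take a maximum-size set D meeting every edge at most once.
   By maximality every vertex of an edge lies in an edge meeting D exactly
   once, so discarding those edges lowers the maximum degree.  Induction gives
   Delta sets, each edge meeting one of them exactly once, and sending the
   Delta sums of messages over these sets is a scheme. *)

Lemma sum_card_fibers (T U : finType) (A : {set T}) (g : T -> U) :
  \sum_(x : U) #|[set w in A | g w == x]| = #|A|.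
Proof.
rewrite -sum1_card (partition_big g predT) //=.
by apply: eq_bigr => x _; rewrite -sum1_card; apply: eq_bigl => w; rewrite inE.
Qed.

Section Nesting.
Variables (m n : nat) (R : 'I_n -> {set 'I_m}).

Lemma nested_edge L (Es : {ffun 'I_L -> {set {set 'I_m}}}) (i : 'I_L) e :
  nested_collection R Es -> e \in Es i -> e \in picod_edges R.
Proof. by case/andP=> /forallP /(_ i) /andP [/subsetP sub _] _ /sub. Qed.

Lemma nested_children L (Es : {ffun 'I_L -> {set {set 'I_m}}}) (i i' : 'I_L) e :
  nested_collection R Es -> i' = i.+1 :> nat -> e \in Es i ->
  exists e1 e2, [/\ e1 \in Es i', e2 \in Es i', e1 \subset e, e2 \subset e
                  & [disjoint e1 & e2]].
Proof.
case/andP=> _ /forallP /(_ i) /forallP /(_ i') /implyP H ii' eE.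
have /forall_inP /(_ e eE) := H (introT eqP ii').
case/exists_inP=> e1 e1E /exists_inP [e2 e2E /and5P [_ _ p1 p2 dis]].
by exists e1, e2; split; rewrite // proper_sub.
Qed.

Lemma nested_top_edge L : has_nested R L.+1 ->
  exists Es : {ffun 'I_L.+1 -> {set {set 'I_m}}},
    nested_collection R Es /\ exists e, e \in Es ord0.
Proof.
case/existsP=> Es nested; exists Es; split=> //.
have /andP [/forallP /(_ ord0) /andP [_ /eqP card0] _] := nested.
by apply/set0Pn; rewrite -card_gt0 card0.
Qed.

End Nesting.

Section LowerBound.
Variables (m n l : nat) (R : 'I_n -> {set 'I_m}) (F : finFieldType).
Variable phi : 'rV[F]_m -> 'rV[F]_l.

Definition slice (T : {set 'I_m}) (c : 'rV[F]_m) : {set 'rV[F]_m} :=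
  [set b : 'rV[F]_m | [forall k, (k \notin T) ==> (b ord0 k == c ord0 k)]].

Definition slice_images_ge (d : nat) (T : {set 'I_m}) : Prop :=
  forall c, #|F| ^ d <= #|phi @: slice T c|.

Lemma sliceP (T : {set 'I_m}) (c b : 'rV[F]_m) :
  reflect (forall k, k \notin T -> b ord0 k = c ord0 k) (b \in slice T c).
Proof.
rewrite inE; apply: (iffP forallP) => [H k kT | H k].
  by move/implyP/(_ kT)/eqP: (H k).
by apply/implyP => /H ->.
Qed.

Lemma slice_images_ge0 (T : {set 'I_m}) : slice_images_ge 0 T.
Proof.
move=> c; rewrite expn0; apply/card_gt0P; exists (phi c).
by apply: imset_f; apply/sliceP.
Qed.

Lemma slice_images_geS i j (psi : 'rV[F]_l -> 'rV[F]_m -> F) (T : {set 'I_m}) d :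
  (forall b, psi (phi b)
     (\row_k (if k \in side_info R i then b ord0 k else 0%R))%R = b ord0 j) ->
  j \in R i -> T \subset R i -> j \notin T ->
  slice_images_ge d T -> slice_images_ge d.+1 (R i).
Proof.
move=> decode jR sTR jT HT c.
set s0 := (\row_k (if k \in side_info R i then c ord0 k else 0%R))%R.
have side b : b \in slice (R i) c ->
    (\row_k (if k \in side_info R i then b ord0 k else 0%R))%R = s0.
  move=> /sliceP bc; apply/rowP => k; rewrite !mxE /side_info in_setC.
  by case: ifP => // kR; rewrite bc ?kR.
rewrite -(sum_card_fibers (phi @: slice (R i) c) (fun w => psi w s0)).
rewrite expnS -sum_nat_const; apply: leq_sum => x _.
set cx := (\row_k (if k == j then x else c ord0 k))%R.
apply: leq_trans (HT cx) _.
apply/subset_leq_card/subsetP => _ /imsetP [b /sliceP bcx ->].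
have bc : b \in slice (R i) c.
  apply/sliceP => k kR; have kT : k \notin T by apply: contra kR; apply: (subsetP sTR).
  by rewrite bcx // mxE ifN //; apply: contraNneq kR => ->.
by rewrite inE imset_f //= -(side b bc) decode bcx // mxE eqxx.
Qed.

Hypothesis scheme : picod_scheme R phi.

Lemma decoding_step e d : e \in picod_edges R ->
  (forall j, j \in e ->
     exists2 T : {set 'I_m}, T \subset e & j \notin T /\ slice_images_ge d T) ->
  slice_images_ge d.+1 e.
Proof.
move=> /imsetP [i _ ->] H.
have [j jR [psi decode]] := scheme i.
have [T sTR [jT HT]] := H j jR.
exact: slice_images_geS decode jR sTR jT HT.
Qed.

Lemma nested_slice_images_ge L (Es : {ffun 'I_L -> {set {set 'I_m}}}) :
  nested_collection R Es ->
  forall d (i : 'I_L) e, i + d <= L -> e \in Es i -> slice_images_ge d e.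
Proof.
move=> nested; elim=> [|d IH] i e idL eE; first exact: slice_images_ge0.
apply: decoding_step (nested_edge nested eE) _ => j je.
case: d IH idL => [|d] IH idL.
  by exists set0; rewrite ?sub0set ?in_set0 //; split=> //; apply: slice_images_ge0.
have iL : i.+1 < L by lia.
have [e1 [e2 [e1E e2E se1 se2 dis]]] :=
  nested_children nested (i' := Ordinal iL) erefl eE.
have idL' : Ordinal iL + d.+1 <= L by rewrite /=; lia.
case: (boolP (j \in e1)) => je1.
  by exists e2 => //; split; [rewrite (disjointFr dis je1) | apply: IH idL' e2E].
by exists e1 => //; split; last apply: IH idL' e1E.
Qed.

Lemma has_nested_le_length L : has_nested R L -> L <= l.
Proof.
case: L => // L /nested_top_edge [Es [nested [e eE]]].
rewrite -(leq_exp2l _ _ (finNzRing_gt1 F)).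
have := nested_slice_images_ge nested (d := L.+1) (i := ord0) (leqnn _) eE 0%R.
move/leq_trans; apply.
by rewrite -[X in _ <= _ ^ X]mul1n -card_mx max_card.
Qed.

Lemma nesting_number_le_length : nesting_number R <= l.
Proof. by apply/bigmax_leqP => L; apply: has_nested_le_length. Qed.

End LowerBound.

Section ExactHitting.
Variables (T : finType) (E : {set {set T}}).

Definition packing (D : {set T}) : bool := [forall e in E, #|e :&: D| <= 1].

Definition max_packing (D : {set T}) : Prop :=
  packing D /\ forall D', packing D' -> #|D'| <= #|D|.

Lemma exists_max_packing : exists D, max_packing D.
Proof.
have packing0 : packing set0 by apply/forall_inP => e _; rewrite setI0 cards0.
by case: (arg_maxnP (fun D : {set T} => #|D|) packing0) => D; exists D.
Qed.

Lemma max_packing_hits_once D v e : max_packing D -> e \in E -> v \in e ->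
  exists2 e0, e0 \in E & (v \in e0) && (#|e0 :&: D| == 1).
Proof.
move=> [packD maxD] eE ve.
have [vD | vD] := boolP (v \in D).
  exists e => //; rewrite ve eqn_leq (forall_inP packD e eE) /=.
  by apply/card_gt0P; exists v; rewrite inE ve vD.
have : ~~ packing (v |: D).
  by apply/negP => /maxD; rewrite cardsU1 vD ltnn.
case/forall_inPn => e0 e0E; rewrite -ltnNge => overlap.
have le1 := forall_inP packD e0 e0E.
have e0vD : e0 :&: (v |: D) = if v \in e0 then v |: (e0 :&: D) else e0 :&: D.
  by case: ifP => ve0; apply/setP => x; rewrite !inE; case: eqVneq => // ->; rewrite ve0.
move: overlap; rewrite e0vD; case: ifP => ve0; last by rewrite ltnNge le1.
rewrite cardsU1 inE (negbTE vD) andbF add1n ltnS => ge1.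
by exists e0; rewrite // ve0 eqn_leq le1.
Qed.

Lemma max_packing_degree_lt D t : max_packing D ->
    (forall v, #|[set e in E | v \in e]| <= t.+1) ->
  forall v, #|[set e in [set e in E | #|e :&: D| != 1] | v \in e]| <= t.
Proof.
move=> maxD deg v.
have sub : [set e in [set e in E | #|e :&: D| != 1] | v \in e]
           \subset [set e in E | v \in e].
  by apply/subsetP => e; rewrite !inE => /andP [/andP [-> _] ->].
have [E0 | /set0Pn [e]] := eqVneq [set e in E | v \in e] set0.
  by move: (subset_leq_card sub); rewrite E0 cards0 leqn0 => /eqP ->.
rewrite inE => /andP [eE ve].
have [e0 e0E /andP [ve0 hit]] := max_packing_hits_once maxD eE ve.
rewrite -ltnS; apply: leq_trans (deg v); apply: proper_card.
by apply/properP; split=> //; exists e0; rewrite !inE ?e0E ?ve0 ?hit.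
Qed.

End ExactHitting.

Lemma exists_exact_hitting_family (T : finType) t (E : {set {set T}}) :
    (forall e, e \in E -> e != set0) -> (forall v, #|[set e in E | v \in e]| <= t) ->
  exists D : 'I_t -> {set T}, forall e, e \in E -> exists k, #|e :&: D k| == 1.
Proof.
elim: t E => [|t IH] E nonempty deg.
  exists (fun _ => set0) => e eE; exfalso.
  have /set0Pn [v ve] := nonempty e eE.
  by move: (deg v); rewrite leqn0 => /eqP /cards0_eq /setP /(_ e); rewrite !inE eE ve.
have [D maxD] := exists_max_packing E.
have nonempty' e : e \in [set e in E | #|e :&: D| != 1] -> e != set0.
  by rewrite inE => /andP [/nonempty].
have [D' hitD'] := IH _ nonempty' (max_packing_degree_lt maxD deg).
exists (fun k => if unlift ord_max k is Some k' then D' k' else D) => e eE.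
have [hit | miss] := boolP (#|e :&: D| == 1).
  by exists ord_max; rewrite unlift_none.
have [k hitk] : exists k, #|e :&: D' k| == 1 by apply: hitD'; rewrite inE eE miss.
by exists (lift ord_max k); rewrite liftK.
Qed.

Lemma picod_scheme_max_degree m n (R : 'I_n -> {set 'I_m}) (F : fieldType) :
  (forall i, R i != set0) -> has_picod_scheme R F (max_degree R).
Proof.
move=> nonempty.
have edges_nonempty e : e \in picod_edges R -> e != set0 by case/imsetP=> i _ ->.
have deg v : #|[set e in picod_edges R | v \in e]| <= max_degree R.
  exact: (@leq_bigmax _ (vdegree R) v).
have [D hitD] := exists_exact_hitting_family edges_nonempty deg.
exists (fun b => \row_(k < max_degree R) \sum_(v in D k) b ord0 v)%R => i.
have /hitD [k /cards1P [j RDj]] : R i \in picod_edges R by apply: imset_f.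
have /setIP [jR jD] : j \in R i :&: D k by rewrite RDj set11.
exists j => //; exists (fun w s => w ord0 k - \sum_(v in D k | v != j) s ord0 v)%R => b.
have side_sum : (\sum_(v in D k | v != j)
    (\row_u (if u \in side_info R i then b ord0 u else 0)) ord0 v
  = \sum_(v in D k | v != j) b ord0 v)%R.
  apply: eq_bigr => v /andP [vD vj]; rewrite mxE /side_info in_setC.
  case: ifP => // /negbFE vR.
  by move: vj; rewrite -in_set1 -RDj inE vR vD.
by rewrite mxE (bigD1 j) //= side_sum addrK.
Qed.

Theorem corollary1 (m n : nat) (R : 'I_n -> {set 'I_m})
  (HR : forall i, R i != set0)
  (Heta : nesting_number R = max_degree R) :
  (forall F : finFieldType, beta_q_eq R F (max_degree R)) /\
  beta_eq R (max_degree R).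
Proof.
have lower (F : finFieldType) l : has_picod_scheme R F l -> max_degree R <= l.
  by case=> phi scheme; rewrite -Heta; apply: nesting_number_le_length scheme.
split; first by move=> F; split; [exact: picod_scheme_max_degree | exact: lower].
split; last exact: lower.
by exists ('F_2 : finFieldType); apply: picod_scheme_max_degree.
Qed.
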